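(* Let $\mathcal A$ be cocomplete, $\lambda:MH\to HM$ a distributive law of the pointed endofunctor $(M,\eta)$ over $H$ with $\lambda$-interpretation $b:MC\to C$, and let $k=c^{-1}\cdot Hb$ and $k'=b\cdot Mk:MHMC\to C$. Then $(C,k')$ is a completely iterative algebra for $MHM$.
   Context: $\mathcal A$ has binary products and coproducts; $H:\mathcal A\to\mathcal A$ is a functor with terminal coalgebra $c:C\to HC$ (an isomorphism by Lambek's lemma). A pointed endofunctor is a functor $M$ with a natural transformation $\eta:\mathrm{Id}\to M$. A distributive law of $(M,\eta)$ over $H$ is a natural transformation $\lambda:MH\to HM$ with $\lambda\cdot\eta H=H\eta$. Its $\lambda$-interpretation is the unique morphism $b:MC\to C$ with $c\cdot b=Hb\cdot\lambda_C\cdot Mc$; it satisfies $b\cdot\eta_C=\mathrm{id}_C$. A $G$-algebra $a:GA\to A$ is a completely iterative algebra if every $e:X\to GX+A$ has a unique $e^\dagger:X\to A$ with $e^\dagger=[a,\mathrm{id}_A]\cdot(Ge^\dagger+\mathrm{id}_A)\cdot e$. *)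

Set Implicit Arguments.
Unset Strict Implicit.

Record Category := {
  obj :> Type;
  hom : obj -> obj -> Type;
  idm : forall a, hom a a;
  comp : forall a b c, hom b c -> hom a b -> hom a c;
  comp_id_l : forall a b (f : hom a b), comp (idm b) f = f;
  comp_id_r : forall a b (f : hom a b), comp f (idm a) = f;
  comp_assoc : forall a b c d (f : hom c d) (g : hom b c) (h : hom a b),
      comp f (comp g h) = comp (comp f g) h
}.
Arguments idm {c0} a.
Arguments comp {c0 a b c} _ _.
Arguments hom {c0} _ _.

Declare Scope cat_scope.
Open Scope cat_scope.
Notation "f ∘ g" := (comp f g) (at level 40, left associativity) : cat_scope.

Record Functor (A B : Category) := {
  fobj :> A -> B;
  fmap : forall a b, hom a b -> hom (fobj a) (fobj b);
  fmap_id : forall a, fmap (idm a) = idm (fobj a);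
  fmap_comp : forall a b c (f : hom b c) (g : hom a b),
      fmap (f ∘ g) = fmap f ∘ fmap g
}.
Arguments fmap {A B} f0 {a b} _.

Definition Fid (A : Category) : Functor A A :=
  {| fobj := fun a => a; fmap := fun a b f => f;
     fmap_id := fun a => eq_refl; fmap_comp := fun a b c f g => eq_refl |}.

Program Definition Fcomp (A B D : Category) (G : Functor B D) (F : Functor A B)
  : Functor A D :=
  {| fobj := fun a => G (F a);
     fmap := fun a b f => fmap G (fmap F f) |}.
Next Obligation. intros; simpl; now rewrite !fmap_id. Qed.
Next Obligation. intros; simpl; now rewrite !fmap_comp. Qed.

Record HasCoproducts (A : Category) := {
  coprod : A -> A -> A;
  cinl : forall a b, hom a (coprod a b);
  cinr : forall a b, hom b (coprod a b);
  copair : forall a b x, hom a x -> hom b x -> hom (coprod a b) x;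
  copair_inl : forall a b x (f : hom a x) (g : hom b x), copair f g ∘ cinl a b = f;
  copair_inr : forall a b x (f : hom a x) (g : hom b x), copair f g ∘ cinr a b = g;
  copair_unique : forall a b x (f : hom a x) (g : hom b x) (h : hom (coprod a b) x),
      h ∘ cinl a b = f -> h ∘ cinr a b = g -> h = copair f g
}.
Arguments coprod {A} _ _ _.
Arguments cinl {A} _ {a b}.
Arguments cinr {A} _ {a b}.
Arguments copair {A} _ {a b x} _ _.

Definition coprod_map (A : Category) (cp : HasCoproducts A) (a b a' b' : A)
  (f : hom a a') (g : hom b b') : hom (coprod cp a b) (coprod cp a' b') :=
  copair cp (cinl cp ∘ f) (cinr cp ∘ g).
Arguments coprod_map {A} cp {a b a' b'} f g.

Record HasProducts (A : Category) := {
  prod : A -> A -> A;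
  pfst : forall a b, hom (prod a b) a;
  psnd : forall a b, hom (prod a b) b;
  pair : forall a b x, hom x a -> hom x b -> hom x (prod a b);
  pair_fst : forall a b x (f : hom x a) (g : hom x b), pfst a b ∘ pair f g = f;
  pair_snd : forall a b x (f : hom x a) (g : hom x b), psnd a b ∘ pair f g = g;
  pair_unique : forall a b x (f : hom x a) (g : hom x b) (h : hom x (prod a b)),
      pfst a b ∘ h = f -> psnd a b ∘ h = g -> h = pair f g
}.

Record SmallCategory := {
  sobj : Set;
  shom : sobj -> sobj -> Set;
  sid : forall i, shom i i;
  scomp : forall i j k, shom j k -> shom i j -> shom i k;
  scomp_id_l : forall i j (f : shom i j), scomp (sid j) f = f;
  scomp_id_r : forall i j (f : shom i j), scomp f (sid i) = f;
  scomp_assoc : forall i j k l (f : shom k l) (g : shom j k) (h : shom i j),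
      scomp f (scomp g h) = scomp (scomp f g) h
}.
Arguments sid {s} i.
Arguments scomp {s i j k} _ _.

Record Diagram (J : SmallCategory) (A : Category) := {
  dobj : sobj J -> A;
  dmap : forall i j, shom i j -> hom (dobj i) (dobj j);
  dmap_id : forall i, dmap (sid i) = idm (dobj i);
  dmap_comp : forall i j k (f : shom j k) (g : shom i j),
      dmap (scomp f g) = dmap f ∘ dmap g
}.
Arguments dmap {J A} d {i j} _.

Definition is_cocone (J : SmallCategory) (A : Category) (D : Diagram J A)
  (X : A) (tau : forall i, hom (dobj D i) X) : Prop :=
  forall i j (f : shom i j), tau j ∘ dmap D f = tau i.
Arguments is_cocone {J A} D {X} tau.

Definition is_colimit (J : SmallCategory) (A : Category) (D : Diagram J A)
  (L : A) (iota : forall i, hom (dobj D i) L) : Prop :=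
  is_cocone D iota /\
  forall (X : A) (tau : forall i, hom (dobj D i) X),
    is_cocone D tau -> exists! u : hom L X, forall i, u ∘ iota i = tau i.
Arguments is_colimit {J A} D {L} iota.

Definition cocomplete (A : Category) : Prop :=
  forall (J : SmallCategory) (D : Diagram J A),
    exists (L : A) (iota : forall i, hom (dobj D i) L), is_colimit D iota.

Definition is_terminal_coalgebra (A : Category) (H : Functor A A) (C : A)
  (c : hom C (H C)) : Prop :=
  forall (X : A) (x : hom X (H X)), exists! h : hom X C, c ∘ h = fmap H h ∘ x.

Definition is_natural (A : Category) (F G : Functor A A)
  (t : forall a, hom (F a) (G a)) : Prop :=
  forall a b (f : hom a b), t b ∘ fmap F f = fmap G f ∘ t a.
Arguments is_natural {A} F G t.

Definition is_distributive_law (A : Category) (M H : Functor A A)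
  (eta : forall a, hom a (M a)) (lam : forall a, hom (M (H a)) (H (M a))) : Prop :=
  is_natural (Fcomp M H) (Fcomp H M) lam /\
  forall a, lam a ∘ eta (H a) = fmap H (eta a).

Definition is_lambda_interpretation (A : Category) (M H : Functor A A)
  (lam : forall a, hom (M (H a)) (H (M a))) (C : A) (c : hom C (H C))
  (b : hom (M C) C) : Prop :=
  (c ∘ b = fmap H b ∘ lam C ∘ fmap M c) /\
  forall b' : hom (M C) C, c ∘ b' = fmap H b' ∘ lam C ∘ fmap M c -> b' = b.

Definition completely_iterative (A : Category) (cp : HasCoproducts A)
  (G : Functor A A) (X0 : A) (a : hom (G X0) X0) : Prop :=
  forall (X : A) (e : hom X (coprod cp (G X) X0)),
    exists! s : hom X X0,
      s = copair cp a (idm X0) ∘ coprod_map cp (fmap G s) (idm X0) ∘ e.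
Arguments is_terminal_coalgebra {A} H {C} c.
Arguments is_distributive_law {A} M H eta lam.
Arguments is_lambda_interpretation {A} M H lam {C} c b.
Arguments completely_iterative {A} cp G {X0} a.


(** Write [lift f := b . Mf] for [f : Y -> C].  The heart of the proof is a
   unique-solution theorem for "doubly M-guarded" flat equations: every
   [d : V -> HMMV] has a unique [v : V -> C] with [c . v = H(lift (lift v)) . d].
   It is obtained by spreading [d] into the graded system
   [δ_n : M^n V -> H M^(n+2) V] ([δ_0 = d], [δ_(n+1) = λ . Mδ_n]); graded systems
   indexed by a set have unique solutions because the coproduct of their
   components (which exists as [A] is cocomplete) carries a coalgebra whose
   unique morphism into [C] restricts to the solution.  Solutions of the graded
   system are exactly the families [lift^n v] with [v] as above, since [lift]
   carries solutions of one level to solutions of the next.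

   Finally an equation [e : X -> MHMX + C] is translated into the flat equation
   [X + C -> HMM(X + C)] whose [C]-part re-enters [c] along [η . η]; its unique
   solution restricts to the identity on [C] and to the unique solution of [e]
   on [X]. *)

Lemma section_monic {A : Category} {a b : A} {m : hom a b} {r : hom b a} :
  r ∘ m = idm a -> forall (x : A) (f g : hom x a), m ∘ f = m ∘ g -> f = g.
Proof.
  intros Hr x f g E.
  rewrite <- (comp_id_l f), <- (comp_id_l g), <- Hr, <- !comp_assoc, E.
  reflexivity.
Qed.

Section BinaryCoproducts.
Context {A : Category} (cp : HasCoproducts A).

Lemma coprod_ext (a b x : A) (f g : hom (coprod cp a b) x) :
  f ∘ cinl cp = g ∘ cinl cp -> f ∘ cinr cp = g ∘ cinr cp -> f = g.
Proof.
  intros El Er.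
  rewrite (@copair_unique A cp a b x (f ∘ cinl cp) (f ∘ cinr cp) f eq_refl eq_refl).
  symmetry; apply copair_unique; symmetry; assumption.
Qed.

Lemma comp_copair (a b x y : A) (f : hom a x) (g : hom b x) (m : hom x y) :
  m ∘ copair cp f g = copair cp (m ∘ f) (m ∘ g).
Proof.
  apply copair_unique; rewrite <- comp_assoc;
    [rewrite copair_inl | rewrite copair_inr]; reflexivity.
Qed.

Lemma copair_coprod_map (a b a' b' x : A) (f : hom a' x) (g : hom b' x)
  (h : hom a a') (i : hom b b') :
  copair cp f g ∘ coprod_map cp h i = copair cp (f ∘ h) (g ∘ i).
Proof.
  unfold coprod_map.
  rewrite comp_copair, !comp_assoc, copair_inl, copair_inr.
  reflexivity.
Qed.

End BinaryCoproducts.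

Definition discrete_hom (I : Set) (i j : I) : Set := {_ : unit | i = j}.

Definition discrete (I : Set) : SmallCategory.
Proof.
  refine {| sobj := I; shom := discrete_hom I;
            sid := fun i => exist _ tt eq_refl;
            scomp := fun i j k f g =>
              exist _ tt (eq_trans (proj2_sig g) (proj2_sig f)) |}.
  - intros i j [[] p]; destruct p; reflexivity.
  - intros i j [[] p]; destruct p; reflexivity.
  - intros i j k l [[] p] [[] q] [[] r]; destruct p, q, r; reflexivity.
Defined.

Definition discrete_diagram (A : Category) (I : Set) (Y : I -> A)
  : Diagram (discrete I) A.
Proof.
  refine (@Build_Diagram (discrete I) A Y
    (fun i j (f : discrete_hom I i j) =>
       match proj2_sig f in _ = j' return hom (Y i) (Y j') with
       | eq_refl => idm (Y i)
       end) _ _).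
  - reflexivity.
  - intros i j k [[] p] [[] q]; destruct p, q; simpl.
    symmetry; apply comp_id_l.
Defined.
Arguments discrete_diagram {A I} Y.

Definition is_coproduct (A : Category) (I : Set) (Y : I -> A) (Z : A)
  (iota : forall i, hom (Y i) Z) : Prop :=
  forall (X : A) (tau : forall i, hom (Y i) X),
    exists! u : hom Z X, forall i, u ∘ iota i = tau i.
Arguments is_coproduct {A I} Y {Z} iota.

(** A coproduct is the colimit of the discrete diagram, every cocone over
    which is just a family of morphisms. *)
Lemma cocomplete_coproduct {A : Category} (Hcoc : cocomplete A)
  {I : Set} (Y : I -> A) :
  exists (Z : A) (iota : forall i, hom (Y i) Z), is_coproduct Y iota.
Proof.
  destruct (Hcoc (discrete I) (discrete_diagram Y)) as [Z [iota [_ Huniv]]].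
  exists Z, iota. intros X tau. apply Huniv.
  intros i j [[] p]; destruct p; simpl. apply comp_id_r.
Qed.

(** ** Graded systems over a terminal coalgebra *)

Section GradedSystems.
Context {A : Category} (H : Functor A A) {C : A} (c : hom C (H C)).
Hypothesis Hterm : is_terminal_coalgebra H c.

Lemma terminal_endo_id (f : hom C C) : c ∘ f = fmap H f ∘ c -> f = idm C.
Proof.
  intro Ef. destruct (Hterm C c) as [h [_ Huniq]].
  rewrite <- (Huniq f Ef). apply Huniq.
  rewrite fmap_id, comp_id_l, comp_id_r. reflexivity.
Qed.

Definition solves {I : Set} (tau : I -> I) (Y : I -> A)
  (d : forall i, hom (Y i) (H (Y (tau i)))) (u : forall i, hom (Y i) C) : Prop :=
  forall i, c ∘ u i = fmap H (u (tau i)) ∘ d i.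

(** Every set-indexed graded system has exactly one solution: the solutions are
    the restrictions of the coalgebra morphisms from the coproduct of the
    components, equipped with the coalgebra structure induced by [d]. *)
Lemma graded_system_solution (Hcoc : cocomplete A) {I : Set} (tau : I -> I)
  (Y : I -> A) (d : forall i, hom (Y i) (H (Y (tau i)))) :
  (exists u, solves tau Y d u) /\
  (forall u v, solves tau Y d u -> solves tau Y d v -> forall i, u i = v i).
Proof.
  destruct (cocomplete_coproduct Hcoc Y) as [Z [iota Hcop]].
  destruct (Hcop (H Z) (fun i => fmap H (iota (tau i)) ∘ d i)) as [dZ [HdZ _]].
  assert (copair_coalg : forall u, solves tau Y d u -> forall U : hom Z C,
             (forall i, U ∘ iota i = u i) -> c ∘ U = fmap H U ∘ dZ).
  { intros u Hu U HU.
    destruct (Hcop (H C) (fun i => c ∘ u i)) as [m [_ Hm]].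
    transitivity m; [symmetry|]; apply Hm; intro i.
    - rewrite <- comp_assoc, HU. reflexivity.
    - rewrite <- comp_assoc, HdZ, comp_assoc, <- fmap_comp, HU.
      symmetry; apply Hu. }
  destruct (Hterm Z dZ) as [h [Hh Huniq]].
  split.
  - exists (fun i => h ∘ iota i). intro i.
    rewrite comp_assoc, Hh, <- comp_assoc, HdZ, comp_assoc, <- fmap_comp.
    reflexivity.
  - intros u v Hu Hv i.
    destruct (Hcop C u) as [U [HU _]]. destruct (Hcop C v) as [V [HV _]].
    rewrite <- HU, <- HV.
    rewrite <- (Huniq U (copair_coalg u Hu U HU)),
            <- (Huniq V (copair_coalg v Hv V HV)).
    reflexivity.
Qed.

End GradedSystems.

(** ** Doubly guarded equations for the λ-interpretation *)

Section Interpretation.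
Context {A : Category} (H M : Functor A A) (eta : forall a, hom a (M a))
  (lam : forall a, hom (M (H a)) (H (M a))) {C : A} (c : hom C (H C))
  (b : hom (M C) C).
Hypothesis Hterm : is_terminal_coalgebra H c.
Hypothesis Heta : is_natural (Fid A) M eta.
Hypothesis Hlam : is_distributive_law M H eta lam.
Hypothesis Hb : c ∘ b = fmap H b ∘ lam C ∘ fmap M c.

Definition lift {Y : A} (f : hom Y C) : hom (M Y) C := b ∘ fmap M f.

Lemma lift_step {Y Z : A} (f : hom Y C) (g : hom Z C) (dl : hom Y (H Z)) :
  c ∘ f = fmap H g ∘ dl -> c ∘ lift f = fmap H (lift g) ∘ (lam Z ∘ fmap M dl).
Proof.
  intro Ef. unfold lift.
  pose proof (proj1 Hlam _ _ g) as Nat; simpl in Nat.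
  rewrite comp_assoc, Hb, <- comp_assoc, <- fmap_comp, Ef.
  rewrite !fmap_comp, !comp_assoc, <- (comp_assoc (fmap H b) (lam C)), Nat,
          !comp_assoc.
  reflexivity.
Qed.

(** The λ-interpretation is a left inverse of the point: both sides are
    coalgebra endomorphisms of [C]. *)
Lemma interpretation_unit : b ∘ eta C = idm C.
Proof.
  apply (terminal_endo_id H c Hterm).
  pose proof (Heta _ _ c) as Nat; simpl in Nat.
  rewrite comp_assoc, Hb, <- comp_assoc, <- Nat, comp_assoc,
          <- (comp_assoc (fmap H b)), (proj2 Hlam), <- fmap_comp.
  reflexivity.
Qed.

Lemma lift_comp {Y Z : A} (f : hom Z C) (g : hom Y Z) :
  lift f ∘ fmap M g = lift (f ∘ g).
Proof. unfold lift. rewrite <- comp_assoc, <- fmap_comp. reflexivity. Qed.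

Lemma lift_eta {Y : A} (f : hom Y C) : lift f ∘ eta Y = f.
Proof.
  unfold lift. pose proof (Heta _ _ f) as Nat; simpl in Nat.
  rewrite <- comp_assoc, <- Nat, comp_assoc, interpretation_unit, comp_id_l.
  reflexivity.
Qed.

Definition guarded_solution {V : A} (d : hom V (H (M (M V)))) (v : hom V C)
  : Prop := c ∘ v = fmap H (lift (lift v)) ∘ d.

Fixpoint iterM (n : nat) (V : A) : A :=
  match n with 0 => V | S m => M (iterM m V) end.

Fixpoint spread {V : A} (d : hom V (H (M (M V)))) (n : nat)
  : hom (iterM n V) (H (iterM (S (S n)) V)) :=
  match n with
  | 0 => d
  | S m => lam _ ∘ fmap M (spread d m)
  end.

Fixpoint lift_iter {V : A} (v : hom V C) (n : nat) : hom (iterM n V) C :=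
  match n with 0 => v | S m => lift (lift_iter v m) end.

Lemma lift_iter_solves {V : A} (d : hom V (H (M (M V)))) (v : hom V C) :
  guarded_solution d v ->
  solves H c (fun n => S (S n)) (fun n => iterM n V) (spread d) (lift_iter v).
Proof.
  intros Hv n. induction n as [|m IH].
  - exact Hv.
  - exact (lift_step _ _ _ IH).
Qed.

(** Each level of a solution of the spread system is the lift of the level
    below, since both families solve the system shifted by one level. *)
Lemma solution_levels (Hcoc : cocomplete A) {V : A} (d : hom V (H (M (M V))))
  (u : forall n, hom (iterM n V) C) :
  solves H c (fun n => S (S n)) (fun n => iterM n V) (spread d) u ->
  forall n, u (S n) = lift (u n).
Proof.
  intro Hu.
  destruct (graded_system_solution H c Hterm Hcoc (fun n => S (S n))
              (fun n => iterM (S n) V) (fun n => spread d (S n)))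
    as [_ Huniq].
  apply Huniq; intro m.
  - exact (Hu (S m)).
  - exact (lift_step _ _ _ (Hu m)).
Qed.

Theorem guarded_unique_solution (Hcoc : cocomplete A) {V : A}
  (d : hom V (H (M (M V)))) : exists! v : hom V C, guarded_solution d v.
Proof.
  destruct (graded_system_solution H c Hterm Hcoc (fun n => S (S n))
              (fun n => iterM n V) (spread d)) as [[u Hu] Huniq].
  exists (u 0). split.
  - pose proof (Hu 0) as Hu0; simpl in Hu0.
    rewrite (solution_levels Hcoc d u Hu 1), (solution_levels Hcoc d u Hu 0) in Hu0.
    exact Hu0.
  - intros v Hv. exact (Huniq u (lift_iter v) Hu (lift_iter_solves d v Hv) 0).
Qed.

(** ** Iteration equations for [MHM] as doubly guarded equations *)

Section Iteration.
Context (cp : HasCoproducts A) (cinv : hom (H C) C).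
Hypothesis Hc1 : c ∘ cinv = idm (H C).
Hypothesis Hc2 : cinv ∘ c = idm C.

Definition kappa : hom (M (H (M C))) C := b ∘ fmap M (cinv ∘ fmap H b).

Definition guarded_step {X : A} (s : hom X C) : hom (M (H (M X))) (H C) :=
  fmap H (lift (lift s)) ∘ lam (M X).

Lemma kappa_unfold {X : A} (s : hom X C) :
  c ∘ (kappa ∘ fmap M (fmap H (fmap M s))) = guarded_step s.
Proof.
  assert (Hk : kappa ∘ fmap M (fmap H (fmap M s)) = lift (cinv ∘ fmap H (lift s))).
  { unfold kappa, lift.
    rewrite <- comp_assoc, <- fmap_comp, <- (comp_assoc cinv), <- fmap_comp.
    reflexivity. }
  assert (Hcs : c ∘ (cinv ∘ fmap H (lift s)) = fmap H (lift s) ∘ idm (H (M X))).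
  { rewrite comp_assoc, Hc1, comp_id_l, comp_id_r. reflexivity. }
  rewrite Hk, (lift_step _ _ _ Hcs), fmap_id, comp_id_r.
  reflexivity.
Qed.

Context (X : A) (e : hom X (coprod cp (M (H (M X))) C)).

Definition iteration_rhs (s : hom X C) : hom X C :=
  copair cp kappa (idm C) ∘ coprod_map cp (fmap (Fcomp M (Fcomp H M)) s) (idm C) ∘ e.

Lemma iteration_rhs_unfold (s : hom X C) :
  c ∘ iteration_rhs s = copair cp (guarded_step s) c ∘ e.
Proof.
  unfold iteration_rhs.
  rewrite copair_coprod_map, comp_assoc, comp_copair, comp_id_l, comp_id_r.
  simpl. rewrite kappa_unfold. reflexivity.
Qed.

Local Notation Z := (coprod cp X C).
Local Notation inX := (@cinl A cp X C).
Local Notation inC := (@cinr A cp X C).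

(** The flat equation on [X + C] associated with [e]: the [X]-part follows
    [e], a guard [MHMX] being pushed to [HMM(X + C)] by [λ], while a value in
    [C] is unfolded by [c] and re-enters through [η . η]. *)
Definition restart : hom C (H (M (M Z))) :=
  fmap H (eta (M Z) ∘ eta Z ∘ inC) ∘ c.

Definition resume : hom (M (H (M X))) (H (M (M Z))) :=
  lam (M Z) ∘ fmap M (fmap H (fmap M (inX))).

Definition flat_equation : hom Z (H (M (M Z))) :=
  copair cp (copair cp resume restart ∘ e) restart.

Lemma restart_solution (w : hom Z C) :
  fmap H (lift (lift w)) ∘ restart = fmap H (w ∘ inC) ∘ c.
Proof.
  unfold restart.
  rewrite comp_assoc, <- fmap_comp, !comp_assoc, !lift_eta.
  reflexivity.
Qed.

Lemma resume_solution (w : hom Z C) :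
  fmap H (lift (lift w)) ∘ resume = guarded_step (w ∘ inX).
Proof.
  unfold resume, guarded_step.
  pose proof (proj1 Hlam _ _ (fmap M (inX))) as Nat; simpl in Nat.
  rewrite Nat, comp_assoc, <- fmap_comp, !lift_comp.
  reflexivity.
Qed.

Lemma flat_equation_inl (w : hom Z C) : w ∘ inC = idm C ->
  fmap H (lift (lift w)) ∘ flat_equation ∘ inX
  = copair cp (guarded_step (w ∘ inX)) c ∘ e.
Proof.
  intro Hw. unfold flat_equation.
  rewrite <- comp_assoc, copair_inl, comp_assoc, comp_copair,
          resume_solution, restart_solution, Hw, fmap_id, comp_id_l.
  reflexivity.
Qed.

Lemma flat_equation_inr (w : hom Z C) :
  fmap H (lift (lift w)) ∘ flat_equation ∘ inC = fmap H (w ∘ inC) ∘ c.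
Proof.
  unfold flat_equation. rewrite <- comp_assoc, copair_inr.
  apply restart_solution.
Qed.

Lemma flat_solution_on_C (v : hom Z C) :
  guarded_solution flat_equation v -> v ∘ inC = idm C.
Proof.
  intro Hv. apply (terminal_endo_id H c Hterm).
  rewrite comp_assoc, Hv. apply flat_equation_inr.
Qed.

Lemma flat_solution_on_X (v : hom Z C) :
  guarded_solution flat_equation v -> v ∘ inX = iteration_rhs (v ∘ inX).
Proof.
  intro Hv. apply (section_monic Hc2).
  rewrite iteration_rhs_unfold, comp_assoc, Hv.
  apply flat_equation_inl, flat_solution_on_C, Hv.
Qed.

Lemma solution_extends (s : hom X C) :
  s = iteration_rhs s -> guarded_solution flat_equation (copair cp s (idm C)).
Proof.
  intro Hs. unfold guarded_solution. apply coprod_ext.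
  - rewrite <- comp_assoc, copair_inl, flat_equation_inl by apply copair_inr.
    rewrite copair_inl, <- iteration_rhs_unfold, <- Hs.
    reflexivity.
  - rewrite <- comp_assoc, copair_inr, comp_id_r, flat_equation_inr,
            copair_inr, fmap_id, comp_id_l.
    reflexivity.
Qed.

Theorem iteration_unique_solution (Hcoc : cocomplete A) :
  exists! s : hom X C, s = iteration_rhs s.
Proof.
  destruct (guarded_unique_solution Hcoc flat_equation) as [v [Hv Huniq]].
  exists (v ∘ inX). split.
  - exact (flat_solution_on_X v Hv).
  - intros s Hs. rewrite (Huniq _ (solution_extends s Hs)). apply copair_inl.
Qed.

End Iteration.
End Interpretation.

(** [(C, k')] is a completely iterative algebra for [MHM]: only the defining
    equation of the λ-interpretation is needed, its uniqueness is not. *)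
Theorem mainTheorem20 (A : Category) (cp : HasCoproducts A) (pr : HasProducts A)
  (Hcoc : cocomplete A)
  (H : Functor A A) (C : A) (c : hom C (H C)) (cinv : hom (H C) C)
  (Hterm : is_terminal_coalgebra H c)
  (Hc1 : c ∘ cinv = idm (H C)) (Hc2 : cinv ∘ c = idm C)
  (M : Functor A A) (eta : forall a, hom a (M a))
  (Heta : is_natural ((Fid A)) M eta)
  (lam : forall a, hom (M (H a)) (H (M a)))
  (Hlam : is_distributive_law M H eta lam)
  (b : hom (M C) C) (Hb : is_lambda_interpretation M H lam c b) :
  let k : hom (H (M C)) C := cinv ∘ fmap H b in
  let k' : hom (M (H (M C))) C := b ∘ fmap M k in
  completely_iterative cp (Fcomp M (Fcomp H M)) k'.
Proof.
  intros k k' X e.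
  exact (iteration_unique_solution H M eta lam c b Hterm Heta Hlam (proj1 Hb)
           cp cinv Hc1 Hc2 X e Hcoc).
Qed.
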